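(* Let $H$ be an nb-critical graph, $vw\in E(H)$, and $H'=H-vw$. Suppose vertices $s,t$ of a graph $J$ are linked in $J$ via $H$, i.e. $J$ contains a subgraph isomorphic to $H'$ under an isomorphism mapping $v\mapsto s$ and $w\mapsto t$. Then for every near-bipartite coloring $I,F$ of $J$, either $\{s,t\}\subseteq I$, or $\{s,t\}\subseteq F$ and $J[F]$ contains a path from $s$ to $t$.
   Context: A near-bipartite coloring (nb-coloring) of a (multi)graph is a partition of its vertex set into $I,F$ with $I$ independent and the subgraph induced by $F$ a forest (no circuits). A graph is nb-critical if it has no nb-coloring but every proper subgraph has one. *)

(* Finite multigraphs (loops and parallel edges allowed)
   given by a vertex finType V, an edge finType E and an endpoint map
   ends : E -> V * V. *)
From mathcomp Require Import all_boot.
Set Implicit Arguments.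
Unset Strict Implicit.
Unset Printing Implicit Defensive.

Section MGraph.
Variables (V E : finType) (ends : E -> V * V).

Definition joins (e : E) (x y : V) : bool :=
  (ends e == (x, y)) || (ends e == (y, x)).

Definition is_subgraph (VS : {set V}) (ES : {set E}) : Prop :=
  forall e, e \in ES -> (ends e).1 \in VS /\ (ends e).2 \in VS.

(* A circuit using edges from ES: k >= 1 distinct vertices x_0..x_{k-1}
   and k distinct edges e_0..e_{k-1} of ES, e_i joining x_i and
   x_{i+1 mod k}.  (k = 1: a loop; k = 2: two parallel edges.) *)
Definition is_circuit (ES : {set E}) (xs : seq V) (es : seq E) : Prop :=
  [/\ 0 < size xs, size es = size xs, uniq xs & uniq es] /\
  all (fun e => e \in ES) es /\
      all (fun p : E * (V * V) => joins p.1 p.2.1 p.2.2)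
          (zip es (zip xs (rot 1 xs))).

Definition acyclic (ES : {set E}) : Prop :=
  forall xs es, ~ is_circuit ES xs es.

Definition induced (ES : {set E}) (F : {set V}) : {set E} :=
  [set e in ES | ((ends e).1 \in F) && ((ends e).2 \in F)].

Definition independent (ES : {set E}) (I : {set V}) : Prop :=
  forall e, e \in ES -> ~ ((ends e).1 \in I /\ (ends e).2 \in I).

Definition nb_coloring (VS : {set V}) (ES : {set E}) (I F : {set V}) : Prop :=
  [/\ I :&: F = set0, I :|: F = VS, independent ES I & acyclic (induced ES F)].

Definition nb_colorable (VS : {set V}) (ES : {set E}) : Prop :=
  exists I F, nb_coloring VS ES I F.

Definition nb_critical : Prop :=
  ~ nb_colorable setT setT /\
  forall VS ES, is_subgraph VS ES -> (VS, ES) != (setT, setT) ->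
    nb_colorable VS ES.

Definition path_in (ES : {set E}) (s t : V) : Prop :=
  exists xs : seq V,
    [/\ uniq (s :: xs), last s xs = t &
        path (fun x y => [exists e in ES, joins e x y]) s xs].
End MGraph.

(* s, t are linked in J via H, with respect to the edge vw of H joining
   v and w: (phi, psi) is an isomorphism from H' = H - vw onto a subgraph
   of J, i.e. injective on vertices and on the edges of H', preserving
   incidence, with phi v = s and phi w = t. *)
Definition linked_via (VH EH : finType) (endsH : EH -> VH * VH)
  (vw : EH) (v w : VH) (VJ EJ : finType) (endsJ : EJ -> VJ * VJ)
  (s t : VJ) : Prop :=
  joins endsH vw v w /\
  exists (phi : VH -> VJ) (psi : EH -> EJ),
    [/\ injective phi, {in [set~ vw] &, injective psi},
        (forall e, e != vw ->
           joins endsJ (psi e) (phi (endsH e).1) (phi (endsH e).2)),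
        phi v = s & phi w = t].

From mathcomp Require Import all_boot.
From Stdlib Require Import Classical.

Set Implicit Arguments.
Unset Strict Implicit.
Unset Printing Implicit Defensive.

(* Pull the coloring back to H along the embedding of H - vw into J.  If s and
   t are not both in I, the preimage of I is independent in all of H (vw is the
   only edge of H that is not mapped to an edge of J), so, H having no
   nb-coloring, the preimage of F induces a circuit in H.  Since H - vw embeds
   into the forest J[F], that circuit passes through vw, and the rest of it is
   a v-w path avoiding vw, whose image is an s-t path in J[F]. *)

Section Multigraph.
Variables (V E : finType) (ends : E -> V * V).
Implicit Types (ES : {set E}) (F I : {set V}) (e : E) (x y : V).

Lemma joins_sym e x y : joins ends e x y = joins ends e y x.
Proof. by rewrite /joins orbC. Qed.

Lemma joins_ends e x y : joins ends e x y ->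
  (x = (ends e).1 /\ y = (ends e).2) \/ (x = (ends e).2 /\ y = (ends e).1).
Proof.
by rewrite /joins; case: (ends e) => a b /= /orP[] /eqP[-> ->]; [left|right].
Qed.

Lemma joins_uniq e x y x' y' : joins ends e x y -> joins ends e x' y' ->
  (x' = x /\ y' = y) \/ (x' = y /\ y' = x).
Proof. by do 2![case/joins_ends => -[-> ->]]; [left|right|right|left]. Qed.

Lemma induced_joinsE ES F e x y : joins ends e x y ->
  (e \in induced ends ES F) = [&& e \in ES, x \in F & y \in F].
Proof.
by rewrite inE; case/joins_ends => -[-> ->]; rewrite // [(_ \in F) && _]andbC.
Qed.

Lemma inducedD1 ES F e : induced ends (ES :\ e) F = induced ends ES F :\ e.
Proof. by apply/setP => f; rewrite !inE; case: (f != e). Qed.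

Lemma independentD1 ES I e x y : independent ends (ES :\ e) I ->
  joins ends e x y -> ~~ ((x \in I) && (y \in I)) -> independent ends ES I.
Proof.
move=> indep exy notI f f_ES [f1 f2]; have [fe | fne] := eqVneq f e.
  by move: exy notI; rewrite -fe => /joins_ends[] [-> ->]; rewrite f1 f2.
by apply: (indep f) => //; rewrite in_setD1 fne.
Qed.

Lemma path_in_refl ES x : path_in ends ES x x.
Proof. by exists [::]. Qed.

Lemma path_in_sym ES x y : path_in ends ES x y -> path_in ends ES y x.
Proof.
move=> [xs [uxs <- pth]]; exists (rev (belast x xs)); split.
- by rewrite -rev_rcons -lastI rev_uniq.
- by rewrite -(last_cons x) -rev_rcons -lastI rev_cons last_rcons.
- rewrite rev_path; apply: sub_path pth => a b /existsP[f /andP[f_ES jf]].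
  by apply/existsP; exists f; rewrite f_ES joins_sym.
Qed.

(* A circuit x_0 e_0 x_1 ... e_(k-1) is read as the cycle of darts (x_i, e_i),
   the edge e_i leading from x_i to the vertex of the next dart. *)
Definition dart_step ES : rel (V * E) :=
  fun a b => (a.2 \in ES) && joins ends a.2 a.1 b.1.

Lemma dart_path_zip ES x e y f xs es : size es = size xs ->
  all (fun e => e \in ES) (e :: es) &&
  all (fun p : E * (V * V) => joins ends p.1 p.2.1 p.2.2)
      (zip (e :: es) (zip (x :: xs) (rcons xs y)))
  = path (dart_step ES) (x, e) (rcons (zip xs es) (y, f)).
Proof.
elim: xs x e es => [|x' xs IH] x e [|e' es] //=; first by rewrite !andbT.
by case=> sz; rewrite -IH // andbACA.
Qed.

Lemma cycle_dartsE ES xs es : size es = size xs -> 0 < size xs ->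
  cycle (dart_step ES) (zip xs es) =
  all (fun e => e \in ES) es &&
  all (fun p : E * (V * V) => joins ends p.1 p.2.1 p.2.2)
      (zip es (zip xs (rot 1 xs))).
Proof.
case: xs es => [|x xs] [|e es] //= [sz] _.
by rewrite rot1_cons (dart_path_zip _ _ _ _ e).
Qed.

Lemma circuitE ES xs es : is_circuit ends ES xs es <->
  [/\ 0 < size xs, size es = size xs, uniq xs, uniq es
    & cycle (dart_step ES) (zip xs es)].
Proof.
split=> [[[pos sz uxs ues] [inES jn]] | [pos sz uxs ues]].
  by split=> //; rewrite cycle_dartsE // inES jn.
by rewrite cycle_dartsE // => /andP[inES jn]; do 2!split.
Qed.

Lemma circuit_edges_sub ES xs es :
  is_circuit ends ES xs es -> {subset es <= ES}.
Proof. by case=> _ [/allP]. Qed.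

Lemma circuitD1 ES e xs es : is_circuit ends ES xs es -> e \notin es ->
  is_circuit ends (ES :\ e) xs es.
Proof.
move=> [conds [/allP inES jn]] e_es; do 2!split=> //.
apply/allP => f f_es; rewrite in_setD1 inES // andbT.
by apply: contraNneq e_es => <-.
Qed.

Lemma dart_path_in ES d ds : path (dart_step ES) d ds ->
  uniq (map fst (d :: ds)) -> path_in ends ES d.1 (last d ds).1.
Proof.
move=> pth uds; exists (map fst ds); split; rewrite ?last_map //.
rewrite path_map; apply: sub_path pth => a b /andP[a_ES jab].
by apply/existsP; exists a.2; rewrite a_ES.
Qed.

Lemma dart_pathD1 ES e d ds : path (dart_step ES) d ds ->
  e \notin map snd (belast d ds) -> path (dart_step (ES :\ e)) d ds.
Proof.
elim: ds d => [|d' ds IH] d //= /andP[/andP[d_ES jd] pth].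
rewrite inE negb_or => /andP[ed notin].
by rewrite /dart_step in_setD1 eq_sym ed d_ES jd IH.
Qed.

Lemma circuit_path_in ES xs es e x y : is_circuit ends ES xs es ->
  e \in es -> joins ends e x y -> path_in ends (ES :\ e) x y.
Proof.
move=> /circuitE[_ sz uxs ues cyc] e_es exy.
have c_fst : map fst (zip xs es) = xs by apply: unzip1_zip; rewrite sz.
have c_snd : map snd (zip xs es) = es by apply: unzip2_zip; rewrite sz.
have [d d_c de] : exists2 d, d \in zip xs es & e = d.2.
  by apply/mapP; rewrite c_snd.
have [i ds rot_d] := rot_to d_c.
have {cyc} : cycle (dart_step ES) (d :: ds) by rewrite -rot_d rot_cycle.
have {uxs} : uniq (map fst (d :: ds)) by rewrite -rot_d map_rot rot_uniq c_fst.
have {ues} : uniq (map snd (d :: ds)) by rewrite -rot_d map_rot rot_uniq c_snd.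
rewrite {}de in exy *; case: ds {rot_d} => [|q qs] /=.
  move=> _ _ /andP[/andP[_ jd] _].
  by case: (joins_uniq exy jd) => -[<- <-]; apply: path_in_refl.
move=> /andP[e_qs _] uds /andP[/andP[_ jd] pth].
have pth_e : path (dart_step (ES :\ d.2)) q (rcons qs d).
  by apply: dart_pathD1; rewrite ?belast_rcons.
have uniq_q : uniq (map fst (q :: rcons qs d)).
  by rewrite -rcons_cons map_rcons rcons_uniq.
have := dart_path_in pth_e uniq_q; rewrite last_rcons.
by case: (joins_uniq exy jd) => -[<- <-] // /path_in_sym.
Qed.

End Multigraph.

Section Homomorphism.
Variables (VH EH VJ EJ : finType).
Variables (endsH : EH -> VH * VH) (endsJ : EJ -> VJ * VJ).
Variables (phi : VH -> VJ) (psi : EH -> EJ).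
Implicit Types (ES : {set EH}) (EJS : {set EJ}).

Definition is_hom ES EJS : Prop := forall e, e \in ES ->
  psi e \in EJS /\ joins endsJ (psi e) (phi (endsH e).1) (phi (endsH e).2).

Lemma hom_joins ES EJS e x y : is_hom ES EJS -> e \in ES ->
  joins endsH e x y -> joins endsJ (psi e) (phi x) (phi y).
Proof.
move=> hom e_ES exy; have [_ j] := hom e e_ES.
by case/joins_ends: exy => -[-> ->]; rewrite // joins_sym.
Qed.

Lemma hom_induced ES EJS (F : {set VJ}) : is_hom ES EJS ->
  is_hom (induced endsH ES (phi @^-1: F)) (induced endsJ EJS F).
Proof.
move=> hom e /setIdP[e_ES /andP[e1 e2]]; have [psi_e j] := hom e e_ES.
rewrite !inE in e1 e2.
by split=> //; rewrite (induced_joinsE _ _ j) psi_e e1 e2.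
Qed.

Lemma independent_preim ES EJS (I : {set VJ}) : is_hom ES EJS ->
  independent endsJ EJS I -> independent endsH ES (phi @^-1: I).
Proof.
move=> hom indep e e_ES; rewrite !inE => -[e1 e2].
have [psi_e j] := hom e e_ES; apply: (indep _ psi_e).
by case/joins_ends: j => -[<- <-].
Qed.

Hypothesis phi_inj : injective phi.

Lemma path_in_hom ES EJS x y : is_hom ES EJS ->
  path_in endsH ES x y -> path_in endsJ EJS (phi x) (phi y).
Proof.
move=> hom [xs [uxs <- pth]]; exists (map phi xs); split.
- by rewrite -map_cons (map_inj_uniq phi_inj).
- by rewrite last_map.
- rewrite path_map; apply: sub_path pth => a b /existsP[e /andP[e_ES jab]].
  apply/existsP; exists (psi e).
  by rewrite (hom_joins hom e_ES jab) andbT; have [] := hom e e_ES.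
Qed.

Lemma circuit_hom ES EJS xs es : is_hom ES EJS -> {in ES &, injective psi} ->
  is_circuit endsH ES xs es -> is_circuit endsJ EJS (map phi xs) (map psi es).
Proof.
move=> hom psi_inj circ; have es_ES := circuit_edges_sub circ.
case/circuitE: circ => pos sz uxs ues cyc; apply/circuitE; split.
- by rewrite size_map.
- by rewrite !size_map.
- by rewrite (map_inj_uniq phi_inj).
- by rewrite (map_inj_in_uniq (sub_in2 es_ES psi_inj)).
have c_fst : map fst (zip xs es) = xs by apply: unzip1_zip; rewrite sz.
have c_snd : map snd (zip xs es) = es by apply: unzip2_zip; rewrite sz.
rewrite -[in map phi _]c_fst -[in map psi _]c_snd -!map_comp zip_map.
rewrite cycle_map.
apply: sub_cycle cyc => a b /andP[a_ES jab]; rewrite /relpre /=.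
by rewrite /dart_step (hom_joins hom a_ES jab) andbT; have [] := hom _ a_ES.
Qed.

Lemma acyclic_hom ES EJS : is_hom ES EJS -> {in ES &, injective psi} ->
  acyclic endsJ EJS -> acyclic endsH ES.
Proof. by move=> hom psi_inj acyc xs es /(circuit_hom hom psi_inj)/acyc. Qed.

End Homomorphism.

Theorem lemma3p2 (VH EH : finType) (endsH : EH -> VH * VH)
  (vw : EH) (v w : VH)
  (VJ EJ : finType) (endsJ : EJ -> VJ * VJ) (s t : VJ) :
  nb_critical endsH ->
  joins endsH vw v w ->
  linked_via endsH vw v w endsJ s t ->
  forall I F : {set VJ}, nb_coloring endsJ setT setT I F ->
    (s \in I /\ t \in I) \/
    [/\ s \in F, t \in F & path_in endsJ (induced endsJ setT F) s t].
Proof.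
move=> [not_colorable _] vw_joins [_ [phi [psi [phi_inj psi_inj psi_joins]]]].
move=> <- <- I F [IF0 IFT indepI acycF].
have [|notI] := boolP ((phi v \in I) && (phi w \in I)).
  by move/andP; left.
right; set FH := phi @^-1: F.
have hom_H' : is_hom endsH endsJ phi psi (setT :\ vw) setT.
  move=> e; rewrite in_setD1 => /andP[e_vw _].
  by split; [exact: in_setT | exact: psi_joins].
have hom_F : is_hom endsH endsJ phi psi
               (induced endsH setT FH :\ vw) (induced endsJ setT F).
  by rewrite -inducedD1; apply: hom_induced.
have psi_inj_F : {in induced endsH setT FH :\ vw &, injective psi}.
  by apply: sub_in2 psi_inj => e; rewrite in_setD1 in_setC1 => /andP[].
have [xs [es circ]] :
    exists xs es, is_circuit endsH (induced endsH setT FH) xs es.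
  apply: NNPP => no_circuit; apply: not_colorable.
  exists (phi @^-1: I), FH; split.
  - by rewrite -preimsetI IF0 preimset0.
  - by rewrite -preimsetU IFT preimsetT.
  - apply: independentD1 (independent_preim hom_H' indepI) vw_joins _.
    by rewrite !inE.
  - by move=> xs es circ; apply: no_circuit; exists xs, es.
have vw_es : vw \in es.
  apply/negPn/negP => vw_es.
  exact: (acyclic_hom phi_inj hom_F psi_inj_F acycF) _ _ (circuitD1 circ vw_es).
have := circuit_edges_sub circ vw_es.
rewrite (induced_joinsE _ _ vw_joins) !inE => /and3P[_ vF wF]; split=> //.
exact: (path_in_hom phi_inj hom_F) (circuit_path_in circ vw_es vw_joins).
Qed.
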